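(* If all jobs are infinitesimal, then for any constant $\epsilon\in(0,1)$ and any $\alpha\in(0,1)$, IPR with $\rho=2$ is a $(1+\epsilon)(1+\alpha)$-consistent and $(1+1/\alpha)$-robust partitioning algorithm.
   Context: Scheduling with Speed Predictions (SSP). Jobs with processing times are processed by $m$ machines with true speeds $s_1,\dots,s_m>0$; processing load $q$ on machine $i$ takes time $q/s_i$. For a bag $B$, $p(B)$ is its total processing time. In the partitioning stage the algorithm receives the jobs and predicted speeds $\hat{\mathbf s}\ge0$ (not $\mathbf s$) and partitions the jobs into $m$ possibly empty bags. In the scheduling stage $\mathbf s$ is revealed and each bag is assigned whole to a machine; the makespan is $\max_i(\text{total processing time on } i)/s_i$. $opt(\mathbf p,\mathbf s)$ is the minimum makespan of assigning the individual jobs knowing $\mathbf s$. A partitioning algorithm is $c$-consistent (resp. $\beta$-robust) if the two-stage algorithm that runs it and then assigns the bags optimally has makespan at most $c\cdot opt(\mathbf p,\mathbf s)$ whenever $\hat{\mathbf s}=\mathbf s$ (resp. at most $\beta\cdot opt(\mathbf p,\mathbf s)$ for all predictions and speeds). Infinitesimal jobs: all jobs have the same extremely small processing time, so that the total load can be divided into bags of arbitrary total processing times; in particular the LPT redistribution below splits the pooled load perfectly evenly. Algorithm IPR. Input: predicted speeds $\hat s_1\ge\dots\ge\hat s_m$, jobs, $\alpha$, accuracy $\epsilon\in(0,1)$, $\rho\ge1$. (1) Compute a partition $B_1,\dots,B_m$ with $p(B_1)\ge\dots\ge p(B_m)$ such that putting $B_i$ on machine $i$ has makespan at most $(1+\epsilon)opt(\mathbf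 p,\hat{\mathbf s})$ under speeds $\hat{\mathbf s}$. (2) Set $\overline{OPT}_C=\max_i p(B_i)/\hat s_i$, $\mathcal M_i=\{B_i\}$. (3) While $\max\{p(B): B\in\cup_i\mathcal M_i, |B|\ge2\}>\rho\min\{p(B):B\in\cup_i\mathcal M_i\}$: compute $\mathcal M'=$ LPT-Rebalance$(\mathcal M)$; if $\max_i\sum_{B\in\mathcal M'_i}p(B)/\hat s_i>(1+\alpha)\overline{OPT}_C$ return the current bags; else $\mathcal M\leftarrow\mathcal M'$. (4) Return the bags $\cup_i\mathcal M_i$. LPT-Rebalance: let $B_{\min}$ be a bag of minimum $p(B)$, $\mathcal M_{\max}$ a collection containing a bag of maximum $p(B)$ among bags with at least two jobs; move $B_{\min}$ into $\mathcal M_{\max}$, let $\ell=|\mathcal M_{\max}|$, pool its jobs and redistribute them into $\ell$ new bags by LPT (jobs in non-increasing processing time, each into a currently least-loaded bag). *)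

From HB Require Import structures.
From mathcomp Require Import all_boot all_order all_algebra.
From mathcomp Require Import all_classical all_reals ereal.
Set Implicit Arguments. Unset Strict Implicit. Unset Printing Implicit Defensive.
Import Order.TTheory GRing.Theory Num.Theory.
Local Open Scope ring_scope.
Local Open Scope classical_set_scope.

(* Model of SSP with infinitesimal jobs: the jobs are described only by their
   total processing time P; a bag is described by its total processing time
   (a nonnegative real). *)

Section SSP.
Variable R : realType.
Variable m : nat.

Definition ptime (l s : R) : \bar R :=
  if s == 0 then (if l == 0 then 0%E else +oo%E) else (l / s)%:E.

Definition makespan (s x : 'I_m -> R) : \bar R :=
  \big[maxe/-oo%E]_(i < m) ptime (x i) (s i).

(* opt(p, s) for infinitesimal jobs of total load P: the best makespan over
   all ways of dividing the load among the machines (assigning the individual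
   jobs, which can realize any division). *)
Definition divisions (P : R) : set ('I_m -> R) :=
  [set x | (forall i, 0 <= x i) /\ \sum_(i < m) x i = P].

Definition opt (P : R) (s : 'I_m -> R) : \bar R :=
  ereal_inf [set makespan s x | x in divisions P].

(* Scheduling stage: bags (a list of bag loads) are assigned whole to
   machines, optimally w.r.t. the true speeds s. *)
Definition bag_loads (bags : seq R) (sigma : {ffun 'I_(size bags) -> 'I_m})
  : 'I_m -> R :=
  fun i => \sum_(j < size bags | sigma j == i) bags`_j.

Definition sched_makespan (s : 'I_m -> R) (bags : seq R) : \bar R :=
  \big[mine/+oo%E]_(sigma : {ffun 'I_(size bags) -> 'I_m})
     makespan s (bag_loads sigma).

(* A (possibly nondeterministic) partitioning algorithm for total load P:
   a relation between predicted speeds and the possible outputs (lists of bag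
   loads). *)
Definition part_alg := ('I_m -> R) -> seq R -> Prop.

Definition speeds_pos (s : 'I_m -> R) := forall i, 0 < s i.
Definition speeds_nneg (s : 'I_m -> R) := forall i, 0 <= s i.
Definition nonincr (s : 'I_m -> R) := forall i j : 'I_m, (i <= j)%N -> s j <= s i.

(* Predictions are given sorted (the algorithm's input convention, w.l.o.g.
   after relabelling the machines). *)
Definition consistent (P : R) (A : part_alg) (c : R) :=
  forall (s : 'I_m -> R) (out : seq R), speeds_pos s -> nonincr s ->
    A s out -> (sched_makespan s out <= c%:E * opt P s)%E.

Definition robust (P : R) (A : part_alg) (beta : R) :=
  forall (shat s : 'I_m -> R) (out : seq R),
    speeds_nneg shat -> nonincr shat -> speeds_pos s ->
    A shat out -> (sched_makespan s out <= beta%:E * opt P s)%E.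

(* A state is the family of collections M_i (lists of bag loads). *)
Definition state := 'I_m -> seq R.

Definition allbags (M : state) : seq R := flatten [seq M i | i <- enum 'I_m].

Definition coll_load (M : state) (i : 'I_m) : R := \sum_(x <- M i) x.

Definition state_makespan (shat : 'I_m -> R) (M : state) : \bar R :=
  makespan shat (coll_load M).

(* With infinitesimal jobs, a bag has at least two jobs iff its processing
   time is positive.  Loop condition:
   max{p(B) : |B| >= 2} > rho * min{p(B)}. *)
Definition loop_cond (rho : R) (M : state) : Prop :=
  exists x y, [/\ x \in allbags M, y \in allbags M, 0 < x & rho * y < x].

(* LPT-Rebalance: move a minimum bag (found in collection imin) into a
   collection imax containing a maximum bag among bags with >= 2 jobs; pool
   the l bags of that collection and split the pooled load evenly (LPT on
   infinitesimal jobs) into l new bags. *)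
Definition rebalance (M M' : state) : Prop :=
  exists (imin imax : 'I_m) (xmin xmax : R),
    [/\ xmin \in M imin /\ (forall y, y \in allbags M -> xmin <= y),
        xmax \in M imax, 0 < xmax,
        (forall y, y \in allbags M -> 0 < y -> y <= xmax) &
        (let M1 := fun i => if i == imin then rem xmin (M i) else M i in
         let l := (size (M1 imax)).+1 in
         let L := xmin + \sum_(y <- M1 imax) y in
         M' = fun i => if i == imax then nseq l (L / l%:R) else M1 i)].

Inductive ipr_loop (shat : 'I_m -> R) (alpha rho : R) (OPTC : \bar R)
  : state -> seq R -> Prop :=
| ipr_stop M : ~ loop_cond rho M -> ipr_loop shat alpha rho OPTC M (allbags M)
| ipr_exceed M M' : loop_cond rho M -> rebalance M M' ->
    ((1 + alpha)%:E * OPTC < state_makespan shat M')%E ->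
    ipr_loop shat alpha rho OPTC M (allbags M)
| ipr_step M M' out : loop_cond rho M -> rebalance M M' ->
    (state_makespan shat M' <= (1 + alpha)%:E * OPTC)%E ->
    ipr_loop shat alpha rho OPTC M' out -> ipr_loop shat alpha rho OPTC M out.

Definition IPR (P alpha eps rho : R) : part_alg :=
  fun shat out =>
    exists b : 'I_m -> R,
      [/\ (forall i, 0 <= b i), \sum_(i < m) b i = P,
          (forall i j : 'I_m, (i <= j)%N -> b j <= b i),
          (makespan shat b <= (1 + eps)%:E * opt P shat)%E &
          ipr_loop shat alpha rho (makespan shat b) (fun i => [:: b i]) out].

End SSP.

(* Consistency: IPR only accepts rebalances that keep the makespan under the
   predicted speeds within (1 + alpha) OPT_C <= (1 + alpha) (1 + eps) opt, and
   putting each collection of bags on its own machine realises that makespan.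
   Robustness: the returned partition consists of exactly m bags, any two of
   which are within a factor c = 1 + 1/alpha >= 2 of each other.  If the loop
   stops normally the factor is rho = 2; if a rebalance overshoots the
   threshold, the invariant
     load_i <= shat_i OPT_C + (|M_i| - 1) (smallest bag)
   on the overshooting collection forces alpha max < (1 + alpha) min.
   Placing m such bags greedily on the true machines, the smallest one last,
   keeps every machine within c P / sum_i s_i <= c opt. *)

From HB Require Import structures.
From mathcomp Require Import all_boot all_order all_algebra.
From mathcomp Require Import all_classical all_reals ereal.
From mathcomp Require Import ring lra.
Import Order.TTheory GRing.Theory Num.Theory.
Local Open Scope ring_scope.
Set Implicit Arguments. Unset Strict Implicit.

Lemma sum_add_at (V : nmodType) (I : finType) (F : I -> V) (a : I) (d : V) :
  \sum_i (F i + (if i == a then d else 0)) = \sum_i F i + d.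
Proof. by rewrite big_split /= -big_mkcond big_pred1_eq. Qed.

Section Makespan.
Variables (R : realType) (m : nat).
Implicit Types (l s : R) (sp x : 'I_m -> R).

Lemma ptime_ge0 l s : 0 <= l -> 0 <= s -> (0 <= ptime l s)%E.
Proof.
move=> l0 s0; rewrite /ptime; case: ifP => _; first by case: ifP.
by rewrite lee_fin divr_ge0.
Qed.

Lemma ptimeEpos l s : 0 < s -> ptime l s = (l / s)%:E.
Proof. by move=> s0; rewrite /ptime gt_eqF. Qed.

Lemma le_ptime l l' s : 0 <= l <= l' -> 0 <= s -> (ptime l s <= ptime l' s)%E.
Proof.
move=> /andP [l0 ll'] s0; rewrite /ptime; case: ifP => _.
  case: ifP => [_|/negbT ln0]; first by case: ifP.
  by rewrite gt_eqF // (lt_le_trans _ ll') // lt_def ln0 l0.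
by rewrite lee_fin ler_wpM2r // invr_ge0.
Qed.

Lemma ptime_le_makespan sp x i : (ptime (x i) (sp i) <= makespan sp x)%E.
Proof. exact: le_bigmax. Qed.

Lemma makespan_ge0 sp x : (0 < m)%N ->
  (forall i, 0 <= x i) -> (forall i, 0 <= sp i) -> (0 <= makespan sp x)%E.
Proof.
move=> m_gt0 x_ge0 sp_ge0; pose i0 := Ordinal m_gt0.
exact: le_trans (ptime_ge0 (x_ge0 i0) (sp_ge0 i0)) (ptime_le_makespan _ _ i0).
Qed.

Lemma lt_makespan_ptime sp x (c : \bar R) :
  (c < makespan sp x)%E -> exists i, (c < ptime (x i) (sp i))%E.
Proof.
by case/bigmax_gtP => [|[i _ ci]]; [rewrite ltNge leNye | exists i].
Qed.

Lemma sum_speeds_gt0 sp : (0 < m)%N -> (forall i, 0 < sp i) -> 0 < \sum_(i < m) sp i.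
Proof.
move=> m_gt0 sp_gt0; rewrite (bigD1 (Ordinal m_gt0)) //= ltr_pwDl //.
by apply: sumr_ge0 => i _; apply: ltW.
Qed.

Lemma opt_ge_avg (P : R) sp : (0 < m)%N -> (forall i, 0 < sp i) ->
  ((P / \sum_(i < m) sp i)%:E <= opt P sp)%E.
Proof.
move=> m_gt0 sp_gt0; have S_gt0 := sum_speeds_gt0 m_gt0 sp_gt0.
apply: le_ereal_inf_tmp => _ [x [_ xP] <-]; rewrite leNgt; apply/negP.
case/bigmax_ltP => _ ltx.
have {}ltx i : x i < (P / \sum_(k < m) sp k) * sp i.
  by have := ltx i isT; rewrite ptimeEpos // lte_fin ltr_pdivrMr.
have : has predT (index_enum 'I_m).
  by apply/hasP; exists (Ordinal m_gt0); rewrite ?mem_index_enum.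
move=> /ltr_sum /(_ (fun i _ => ltx i)).
by rewrite xP -mulr_sumr divfK ?gt_eqF // ltxx.
Qed.

End Makespan.

Section GreedyAssignment.
Variables (R : realType) (m : nat) (sp : 'I_m -> R).
Hypothesis m_gt0 : (0 < m)%N.

Lemma exists_machine_with_room (l : 'I_m -> R) (y T : R) :
  \sum_(i < m) l i + y *+ m <= T * \sum_(i < m) sp i ->
  exists i, l i + y <= sp i * T.
Proof.
move=> le_total; apply/not_existsP => full.
have {}full i : sp i * T < l i + y by rewrite ltNge; apply/negP => /(full i).
have : has predT (index_enum 'I_m).
  by apply/hasP; exists (Ordinal m_gt0); rewrite ?mem_index_enum.
move=> /ltr_sum /(_ (fun i _ => full i)).
rewrite -mulr_suml big_split /= sumr_const card_ord mulrC => /lt_le_trans.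
by move=> /(_ _ le_total); rewrite ltxx.
Qed.

Variables (n : nat) (x : 'I_n -> R) (c T : R).
Hypotheses (n_eq : n = m) (x_ge0 : forall j, 0 <= x j)
  (x_ratio : forall j t, x j <= c * x t) (c_ge2 : 2 <= c).

Lemma sum_setD1_min_le (D : {set 'I_n}) j :
  j \in D -> (forall t, t \in D -> x j <= x t) ->
  \sum_(t in D :\ j) x t + x j *+ m <= c * \sum_t x t.
Proof.
move=> jD jmin; set a := \sum_(t in D :\ j) x t; set b := \sum_(t | t \notin D) x t.
have total : \sum_t x t = x j + a + b.
  by rewrite (bigID (mem D)) /= (big_setD1 j).
have le_D : x j *+ #|D| <= x j + a.
  by rewrite -(big_setD1 j) // -sumr_const; apply: ler_sum.
have le_notD : x j *+ #|[predC D]| <= c * b.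
  by rewrite -sumr_const mulr_sumr; apply: ler_sum.
have split_m : x j *+ m = x j *+ #|D| + x j *+ #|[predC D]|.
  by rewrite -mulrnDr cardC card_ord n_eq.
have a0 : 0 <= a by apply: sumr_ge0.
have two_le : 2 * (x j + a) <= c * (x j + a) by rewrite ler_wpM2r ?addr_ge0.
have := x_ge0 j; rewrite total split_m; move: le_D le_notD two_le.
move: (x j *+ #|D|) (x j *+ #|[predC D]|) => u v; rewrite !mulrDr; lra.
Qed.

Hypotheses (sp_ge0 : forall i, 0 <= sp i) (T_ge0 : 0 <= T)
  (total_le : c * \sum_j x j <= T * \sum_(i < m) sp i).

(* The smallest item goes last; by averaging some machine still has room. *)
Lemma greedy_assignment (D : {set 'I_n}) :
  exists f : 'I_n -> 'I_m, forall i, \sum_(j in D | f j == i) x j <= sp i * T.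
Proof.
have [k] := ubnP #|D|; elim: k D => // k IH D ltDk.
have [->|[j0 j0D]] := set_0Vmem D.
  exists (fun=> Ordinal m_gt0) => i.
  by rewrite big_pred0 ?mulr_ge0 // => j; rewrite inE.
have [j jD jmin] := arg_minP x j0D; have {}jD : j \in D := jD.
have [f fD] : exists f : 'I_n -> 'I_m,
    forall i, \sum_(t in D :\ j | f t == i) x t <= sp i * T.
  by apply: IH; rewrite (cardsD1 j) jD in ltDk.
have [i fits] : exists i, \sum_(t in D :\ j | f t == i) x t + x j <= sp i * T.
  apply: exists_machine_with_room; apply: le_trans total_le.
  by rewrite -(partition_big f predT) //; exact: sum_setD1_min_le.
exists (fun t => if t == j then i else f t) => i'.
rewrite big_mkcondr /= (big_setD1 j) //= eqxx.
rewrite (eq_bigr (fun t => if f t == i' then x t else 0)); last first.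
  by move=> t /setD1P [] /negbTE ->.
rewrite -big_mkcondr /=.
by case: eqP => [<-|_]; [rewrite addrC | rewrite add0r].
Qed.

End GreedyAssignment.

Section Scheduling.
Variables (R : realType) (m : nat) (sp : 'I_m -> R).
Hypotheses (m_gt0 : (0 < m)%N) (sp_gt0 : forall i, 0 < sp i).

Lemma sched_makespan_le_ratio (bs : seq R) (c : R) :
  size bs = m -> (forall x, x \in bs -> 0 <= x) ->
  (forall x y, x \in bs -> y \in bs -> x <= c * y) -> 2 <= c ->
  (sched_makespan sp bs <= (c * (\sum_(x <- bs) x) / \sum_(i < m) sp i)%:E)%E.
Proof.
move=> size_bs bs_ge0 bs_ratio c_ge2.
have S_gt0 := sum_speeds_gt0 m_gt0 sp_gt0.
set T := c * _ / _.
have T_ge0 : 0 <= T.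
  rewrite divr_ge0 ?mulr_ge0 ?(ltW S_gt0) ?(le_trans _ c_ge2) //.
  by rewrite big_seq sumr_ge0.
have nth_ge0 (j : 'I_(size bs)) : 0 <= bs`_j by rewrite bs_ge0 ?mem_nth.
have total_le : c * \sum_(j < size bs) bs`_j <= T * \sum_(i < m) sp i.
  by rewrite /T divfK ?gt_eqF // (big_nth 0) big_mkord.
have [f fits] := greedy_assignment m_gt0 size_bs nth_ge0
  (fun j t => bs_ratio _ _ (mem_nth 0 (ltn_ord j)) (mem_nth 0 (ltn_ord t)))
  c_ge2 (fun i => ltW (sp_gt0 i)) T_ge0 total_le [set: _].
apply: le_trans (bigmin_le _ [ffun j => f j] _) _.
apply/bigmax_leP; split=> [|i _]; first exact: leNye.
rewrite ptimeEpos // lee_fin ler_pdivrMr // mulrC; apply: le_trans (fits i).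
rewrite /bag_loads le_eqVlt; apply/orP; left; apply/eqP.
by apply: eq_bigl => j; rewrite ffunE inE.
Qed.

Lemma sum_nth_tagged (bs : seq R) (tg : seq 'I_m) i0 i :
  size bs = size tg ->
  \sum_(j < size bs | nth i0 tg j == i) bs`_j = \sum_(p <- zip bs tg | p.2 == i) p.1.
Proof.
elim: bs tg => [|b bs IH] [|t tg] //=; first by rewrite big_ord0 big_nil.
case=> /IH sum_tl; rewrite big_mkcond big_ord_recl big_cons -sum_tl /=.
by rewrite [in RHS]big_mkcond; case: (t == i); rewrite ?add0r.
Qed.

Lemma allbagsP (M : state R m) x : reflect (exists i, x \in M i) (x \in allbags M).
Proof.
apply: (iffP flattenP) => [[l /mapP [i _ ->] xi]|[i xi]]; first by exists i.
by exists (M i) => //; apply: map_f; rewrite mem_enum.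
Qed.

Lemma sum_allbags (M : state R m) :
  \sum_(x <- allbags M) x = \sum_(i < m) coll_load M i.
Proof. by rewrite big_flatten /= big_map big_enum. Qed.

Lemma size_allbags (M : state R m) : size (allbags M) = (\sum_(i < m) size (M i))%N.
Proof. by rewrite size_flatten /shape -map_comp sumnE big_map big_enum. Qed.

Lemma sched_makespan_le_state (M : state R m) :
  (sched_makespan sp (allbags M) <= state_makespan sp M)%E.
Proof.
pose tags := flatten [seq nseq (size (M k)) k | k <- enum 'I_m].
have size_tags : size (allbags M) = size tags.
  rewrite size_allbags size_flatten /shape -map_comp sumnE big_map big_enum.
  by apply: eq_bigr => k _ /=; rewrite size_nseq.
pose sigma := [ffun j : 'I_(size (allbags M)) => nth (Ordinal m_gt0) tags j].
have -> : state_makespan sp M = makespan sp (bag_loads sigma).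
  apply: eq_bigr => i _; congr ptime; rewrite /bag_loads.
  under eq_bigl do rewrite ffunE.
  rewrite sum_nth_tagged // /allbags /tags.
  have -> : coll_load M i = \sum_(k <- enum 'I_m | k == i) coll_load M k.
    by rewrite big_enum_cond big_pred1_eq.
  have tagged_block k (s : seq R) : \sum_(p <- zip s (nseq (size s) k) | p.2 == i) p.1
      = if k == i then \sum_(x <- s) x else 0.
    elim: s => [|x s IHs]; first by rewrite !big_nil; case: (k == i).
    by rewrite /= !big_cons /= IHs; case: (k == i).
  elim: (enum 'I_m) => [|k ks IH] /=; first by rewrite !big_nil.
  rewrite zip_cat ?size_nseq // big_cat big_cons IH tagged_block.
  by case: (k == i); rewrite /= ?add0r.
exact: le_trans (bigmin_le _ sigma _) (lexx _).
Qed.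

End Scheduling.

Section Rebalance.
Variables (R : realType) (m : nat).
Implicit Types (M : state R m) (P : R).

Definition remove_bag M (i0 : 'I_m) (x0 : R) : state R m :=
  fun i => if i == i0 then rem x0 (M i) else M i.

Definition rebalanced M (imin imax : 'I_m) (xmin : R) : state R m :=
  let M1 := remove_bag M imin xmin in
  fun i => if i == imax then
     nseq (size (M1 imax)).+1 ((xmin + \sum_(y <- M1 imax) y) / (size (M1 imax)).+1%:R)
   else M1 i.

Lemma rebalanceE M M' : rebalance M M' ->
  exists imin imax xmin xmax,
    [/\ xmin \in M imin /\ (forall y, y \in allbags M -> xmin <= y),
        xmax \in M imax, 0 < xmax,
        (forall y, y \in allbags M -> 0 < y -> y <= xmax) &
        M' = rebalanced M imin imax xmin].
Proof. by case=> imin [imax [xmin [xmax [[? ?] ? ? ? ?]]]]; exists imin, imax, xmin, xmax. Qed.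

Variables (M : state R m) (imin imax : 'I_m) (xmin : R).
Hypothesis xmin_in : xmin \in M imin.

Lemma mem_remove_bag i x : x \in remove_bag M imin xmin i -> x \in M i.
Proof. by rewrite /remove_bag; case: ifP => // _; apply: mem_rem. Qed.

Lemma remove_bag_load i : coll_load M i =
  coll_load (remove_bag M imin xmin) i + (if i == imin then xmin else 0).
Proof.
rewrite /coll_load /remove_bag; case: eqP => [->|_]; last by rewrite addr0.
by rewrite (perm_big _ (perm_to_rem xmin_in)) big_cons addrC.
Qed.

Lemma remove_bag_size i :
  size (M i) = (size (remove_bag M imin xmin i) + (if i == imin then 1 else 0))%N.
Proof.
rewrite /remove_bag; case: eqP => [->|_]; last by rewrite addn0.
by rewrite size_rem // addn1 prednK //; case: (M imin) xmin_in.
Qed.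

Lemma rebalanced_load i : coll_load (rebalanced M imin imax xmin) i =
  coll_load (remove_bag M imin xmin) i + (if i == imax then xmin else 0).
Proof.
rewrite /coll_load /rebalanced; case: eqP => [->|_]; last by rewrite addr0.
by rewrite big_nseq iter_addr_0 -[LHS]mulr_natr divfK ?pnatr_eq0 // addrC.
Qed.

Lemma rebalanced_size i : size (rebalanced M imin imax xmin i) =
  (size (remove_bag M imin xmin i) + (if i == imax then 1 else 0))%N.
Proof.
by rewrite /rebalanced; case: eqP => [->|_]; rewrite ?size_nseq ?addn1 ?addn0.
Qed.

Lemma rebalanced_bags_ge i x :
  (forall y, y \in allbags M -> xmin <= y) ->
  x \in rebalanced M imin imax xmin i -> xmin <= x.
Proof.
move=> xmin_le; have ge_rem j y : y \in remove_bag M imin xmin j -> xmin <= y.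
  by move=> /mem_remove_bag yM; apply: xmin_le; apply/allbagsP; exists j.
rewrite /rebalanced; case: eqP => _; last exact: ge_rem.
rewrite mem_nseq => /andP [_ /eqP ->].
rewrite ler_pdivlMr ?ltr0Sn // mulr_natr mulrS lerD2l.
have <- : \sum_(y <- remove_bag M imin xmin imax) xmin =
    xmin *+ size (remove_bag M imin xmin imax).
  by rewrite big_const_seq count_predT iter_addr_0.
by rewrite big_seq [leRHS]big_seq ler_sum // => y /ge_rem.
Qed.

Lemma remove_bag_load_le i :
  0 <= xmin -> coll_load (remove_bag M imin xmin) i <= coll_load M i.
Proof. by move=> xmin_ge0; rewrite (remove_bag_load i) lerDl; case: ifP. Qed.

Lemma rebalanced_overshoot_at_max (shat : 'I_m -> R) (c : \bar R) :
  (forall i x, x \in M i -> 0 <= x) -> (forall i, 0 <= shat i) ->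
  (state_makespan shat M <= c)%E ->
  (c < state_makespan shat (rebalanced M imin imax xmin))%E ->
  (c < ptime (coll_load (remove_bag M imin xmin) imax + xmin) (shat imax))%E.
Proof.
move=> bags_ge0 shat_ge0 M_le /lt_makespan_ptime [i overshoot].
have [i_imax|i_neq] := eqVneq i imax.
  by move: overshoot; rewrite i_imax rebalanced_load eqxx.
move: overshoot; rewrite ltNge rebalanced_load (negbTE i_neq) addr0 => /negP[].
apply: le_trans (le_trans (ptime_le_makespan _ _ i) M_le).
have load_ge0 : 0 <= coll_load (remove_bag M imin xmin) i.
  by rewrite /coll_load big_seq sumr_ge0 // => x /mem_remove_bag; apply: bags_ge0.
by rewrite le_ptime ?load_ge0 ?remove_bag_load_le ?(bags_ge0 _ _ xmin_in).
Qed.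

End Rebalance.

Section Invariants.
Variables (R : realType) (m : nat) (P : R).
Implicit Types (M : state R m).

Definition wf_state M : Prop :=
  [/\ forall i x, x \in M i -> 0 <= x,
      (\sum_(i < m) size (M i))%N = m,
      \sum_(i < m) coll_load M i = P &
      forall i x y, x \in M i -> y \in M i -> x = y].

Lemma wf_state_singletons (b : 'I_m -> R) :
  (forall i, 0 <= b i) -> \sum_(i < m) b i = P -> wf_state (fun i => [:: b i]).
Proof.
move=> b_ge0 b_sum; split.
- by move=> i x; rewrite inE => /eqP ->.
- by rewrite sum1_card card_ord.
- by rewrite -b_sum; apply: eq_bigr => i _; rewrite /coll_load big_seq1.
- by move=> i x y; rewrite !inE => /eqP -> /eqP ->.
Qed.

Lemma wf_state_rebalance M M' : wf_state M -> rebalance M M' -> wf_state M'.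
Proof.
move=> [bags_ge0 count total uniform].
case/rebalanceE=> imin [imax [xmin [_ [[xminM xmin_le] _ _ _ ->]]]].
split.
- move=> i x /(rebalanced_bags_ge xmin_le); apply: le_trans.
  exact: bags_ge0 xminM.
- rewrite -[in RHS]count (eq_bigr _ (fun i _ => rebalanced_size M imin imax xmin i)).
  by rewrite (eq_bigr _ (fun i _ => remove_bag_size xminM i)) !sum_add_at.
- rewrite -total (eq_bigr _ (fun i _ => rebalanced_load M imin imax xmin i)).
  by rewrite (eq_bigr _ (fun i _ => remove_bag_load xminM i)) !sum_add_at.
- move=> i x y; rewrite /rebalanced; case: eqP => _.
    by rewrite !mem_nseq => /andP [_ /eqP ->] /andP [_ /eqP ->].
  by move=> /mem_remove_bag xM /mem_remove_bag yM; exact: uniform xM yM.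
Qed.

End Invariants.

(* The overshooting collection held [k + 1] bags of size [xmax] on a machine
   of share [u]; [L] is its load once the smallest bag is removed, so
   [L + xmin] is its load after the rebalance. *)
Lemma overshoot_max_lt_min (R : realFieldType) (alpha k u L mu xmin xmax : R) :
  0 < alpha -> 0 <= k -> 0 <= xmin -> k * mu <= k * xmin -> (k + 1) * xmax <= u + k * mu ->
  L <= (k + 1) * xmax -> (1 + alpha) * u < L + xmin ->
  alpha * xmax < (1 + alpha) * xmin.
Proof.
move=> alpha_gt0 k_ge0 xmin_ge0 mu_le bound L_le overshoot.
have alpha_u : alpha * u < (k + 1) * xmin by lra.
have : alpha * ((k + 1) * xmax) <= alpha * (u + k * xmin).
  by apply: ler_wpM2l; [exact: ltW | lra].
nra.
Qed.

Section ExcessInvariant.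
Variables (R : realType) (m : nat) (shat : 'I_m -> R) (r : R).
Implicit Types (M : state R m).

(* A rebalance adds to a collection one bag and at most the load of a smallest
   bag, so the load beyond the share [shat i * r] is paid for by the extra bags. *)
Definition excess_bounded M : Prop :=
  exists mu, (forall y, y \in allbags M -> mu <= y) /\
    forall i, coll_load M i <= shat i * r + (size (M i)).-1%:R * mu.

Lemma excess_bounded_singletons (b : 'I_m -> R) :
  (forall i, 0 <= b i) -> (forall i, 0 <= shat i) -> makespan shat b = r%:E ->
  excess_bounded (fun i => [:: b i]).
Proof.
move=> b_ge0 shat_ge0 b_r; exists 0; split.
  by move=> y /allbagsP [i]; rewrite inE => /eqP ->.
move=> i; rewrite /coll_load big_seq1 /= mulr0 addr0.
have := ptime_le_makespan shat b i; rewrite b_r /ptime.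
have [->|shat_neq0] := eqVneq (shat i) 0; first by case: eqP => [->|_]; rewrite ?mul0r // leNgt ltey.
have shat_gt0 : 0 < shat i by rewrite lt_def shat_neq0 shat_ge0.
by rewrite lee_fin ler_pdivrMr // mulrC.
Qed.

Lemma excess_bounded_rebalance M M' : (forall i x, x \in M i -> 0 <= x) ->
  excess_bounded M -> rebalance M M' -> excess_bounded M'.
Proof.
move=> bags_ge0 [mu [mu_le bound]].
case/rebalanceE=> imin [imax [xmin [xmax [[xminM xmin_le] xmaxM _ _ ->]]]].
have xmin_ge0 := bags_ge0 _ _ xminM.
have mu_xmin : mu <= xmin by apply: mu_le; apply/allbagsP; exists imin.
exists xmin; split; first by move=> y /allbagsP [i]; exact: rebalanced_bags_ge.
move=> i; have := bound i.
rewrite (remove_bag_load xminM) rebalanced_load (remove_bag_size xminM) rebalanced_size.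
have k_pos : i = imax -> i != imin -> (0 < size (remove_bag M imin xmin i))%N.
  by move=> -> /negbTE imin_neq; rewrite /remove_bag imin_neq; case: (M imax) xmaxM.
move: k_pos; move: (size _) (coll_load _ i) => k L k_pos.
have mu_le_n (n : nat) : n%:R * mu <= n%:R * xmin by rewrite ler_wpM2l.
have k_xmin : k%:R * xmin <= k.-1%:R * xmin + xmin.
  by rewrite -[X in _ + X]mul1r -mulrDl ler_wpM2r // natr1 ler_nat leqSpred.
have := mu_le_n k; have := mu_le_n k.-1.
case: eqP => [i_imin|i_imin]; case: eqP => [i_imax|i_imax]; rewrite ?addn1 ?addn0 /=.
- lra.
- lra.
- have k_gt0 : (0 < k)%N by apply: k_pos => //; apply/eqP.
  rewrite -[in k%:R * xmin](prednK k_gt0) -natr1 mulrDl mul1r; lra.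
- lra.
Qed.

Lemma rebalance_overshoot_range (P alpha : R) M M' :
  0 < alpha -> (forall i, 0 <= shat i) -> wf_state P M -> excess_bounded M ->
  (state_makespan shat M <= ((1 + alpha) * r)%:E)%E -> rebalance M M' ->
  (((1 + alpha) * r)%:E < state_makespan shat M')%E ->
  exists xmin xmax, (forall y, y \in allbags M -> xmin <= y <= xmax) /\
    alpha * xmax < (1 + alpha) * xmin.
Proof.
move=> alpha_gt0 shat_ge0 [bags_ge0 _ _ uniform] [mu [mu_le bound]] M_le.
case/rebalanceE=> imin [imax [xmin [xmax [[xminM xmin_le] xmaxM xmax_gt0 xmax_ge ->]]]].
have xmin_ge0 := bags_ge0 _ _ xminM.
move/(rebalanced_overshoot_at_max xminM bags_ge0 shat_ge0 M_le) => overshoot.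
have mu_xmin : mu <= xmin by apply: mu_le; apply/allbagsP; exists imin.
have mu_xmax : mu <= xmax by apply: mu_le; apply/allbagsP; exists imax.
set K := size (M imax).
have K_gt0 : (0 < K)%N by rewrite /K; case: (M imax) xmaxM.
have load_max : coll_load M imax = K%:R * xmax.
  rewrite /coll_load; have /all_pred1P -> : all (pred1 xmax) (M imax).
    by apply/allP => x xM; apply/eqP; exact: uniform xM xmaxM.
  by rewrite big_nseq iter_addr_0 mulr_natl.
have K_pred : K%:R = K.-1%:R + 1 :> R by rewrite natr1 prednK.
have bound_max := bound imax; rewrite load_max -/K K_pred in bound_max.
have L1_le := remove_bag_load_le xminM imax xmin_ge0.
rewrite load_max K_pred in L1_le.
have mu_le_xmin : K.-1%:R * mu <= K.-1%:R * xmin by rewrite ler_wpM2l.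
have mu_le_xmax : K.-1%:R * mu <= K.-1%:R * xmax by rewrite ler_wpM2l.
move: bound_max L1_le mu_le_xmin mu_le_xmax (ler0n R K.-1).
move: (K.-1%:R : R) => k bound_max L1_le mu_le_xmin mu_le_xmax k_ge0.
have shat_gt0 : 0 < shat imax.
  rewrite lt_def shat_ge0 andbT; apply/eqP => shat0.
  have := le_trans bound_max; rewrite shat0 mul0r add0r => /(_ _ mu_le_xmax).
  by rewrite mulrDl mul1r gerDl leNgt xmax_gt0.
move: overshoot; rewrite ptimeEpos // lte_fin ltr_pdivlMr // -mulrA [r * _]mulrC.
move/(overshoot_max_lt_min alpha_gt0 k_ge0 xmin_ge0 mu_le_xmin bound_max L1_le) => key.
exists xmin, xmax; split=> // y yM; rewrite xmin_le //=.
have [/(xmax_ge _ yM)//|y_le0] := ltrP 0 y.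
exact: le_trans y_le0 (ltW xmax_gt0).
Qed.

Lemma rebalance_overshoot_ratio (P alpha : R) M M' :
  0 < alpha -> (forall i, 0 <= shat i) -> wf_state P M -> excess_bounded M ->
  (state_makespan shat M <= ((1 + alpha) * r)%:E)%E -> rebalance M M' ->
  (((1 + alpha) * r)%:E < state_makespan shat M')%E ->
  forall x y, x \in allbags M -> y \in allbags M -> x <= (1 + alpha^-1) * y.
Proof.
move=> alpha_gt0 shat_ge0 wf exc M_le rb overshoot x y xM yM.
have [xmin [xmax [range key]]] :=
  rebalance_overshoot_range alpha_gt0 shat_ge0 wf exc M_le rb overshoot.
have /andP [_ x_le] := range x xM; have /andP [y_ge _] := range y yM.
rewrite -(ler_pM2l alpha_gt0) mulrA mulrDr mulr1 mulfV ?gt_eqF //.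
nra.
Qed.

End ExcessInvariant.

Section IPR.
Variables (R : realType) (m : nat).
Hypothesis m_gt0 : (0 < m)%N.
Implicit Types M : state R m.

Lemma ipr_loop_final_state (shat : 'I_m -> R) (alpha rho : R) (OPTC : \bar R)
    (Q : state R m -> Prop) M out :
  ipr_loop shat alpha rho OPTC M out -> Q M ->
  (forall M M', Q M -> loop_cond rho M -> rebalance M M' ->
     (state_makespan shat M' <= (1 + alpha)%:E * OPTC)%E -> Q M') ->
  exists M0, [/\ Q M0, out = allbags M0 &
    ~ loop_cond rho M0 \/ exists M', [/\ loop_cond rho M0, rebalance M0 M' &
        ((1 + alpha)%:E * OPTC < state_makespan shat M')%E]].
Proof.
move=> run QM Q_step; elim: run QM => {M out}.
- by move=> M stop QM; exists M; split=> //; left.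
- by move=> M M' go rb exceeds QM; exists M; split=> //; right; exists M'.
- by move=> M M' out go rb within _ IH QM; apply: IH; exact: Q_step QM go rb within.
Qed.

Lemma coll_load_singletons (b : 'I_m -> R) : coll_load (fun i => [:: b i]) = b.
Proof. by apply: funext => i; rewrite /coll_load big_seq1. Qed.

Lemma not_loop_cond_ratio (rho : R) M x y : 0 <= rho -> ~ loop_cond rho M ->
  (forall z, z \in allbags M -> 0 <= z) ->
  x \in allbags M -> y \in allbags M -> x <= rho * y.
Proof.
move=> rho_ge0 stop bags_ge0 xM yM; rewrite leNgt; apply/negP => lt_x.
apply: stop; exists x, y; split=> //.
exact: le_lt_trans (mulr_ge0 rho_ge0 (bags_ge0 _ yM)) lt_x.
Qed.

Lemma IPR_consistent (P alpha eps rho : R) :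
  0 <= alpha -> @consistent R m P (@IPR R m P alpha eps rho) ((1 + eps) * (1 + alpha)).
Proof.
move=> alpha_ge0 s out s_gt0 _ [b [b_ge0 _ _ b_opt run]].
set OPTC := makespan s b.
have OPTC_ge0 : (0 <= OPTC)%E by apply: makespan_ge0 => // i; apply: ltW.
have one_alpha : (1 <= (1 + alpha)%:E)%E by rewrite lee_fin lerDl.
pose Q M := (state_makespan s M <= (1 + alpha)%:E * OPTC)%E.
have Q_init : Q (fun i => [:: b i]).
  by rewrite /Q /state_makespan coll_load_singletons lee_pemull.
have [M [M_le -> _]] :=
  ipr_loop_final_state run Q_init (fun M M' _ _ _ within => within).
apply: le_trans (sched_makespan_le_state s m_gt0 M) (le_trans M_le _).
by rewrite mulrC EFinM -muleA lee_wpmul2l // (le_trans _ one_alpha).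
Qed.

Lemma IPR_robust (P alpha eps rho : R) :
  0 < alpha <= 1 -> 0 <= rho <= 1 + alpha^-1 ->
  @robust R m P (@IPR R m P alpha eps rho) (1 + alpha^-1).
Proof.
move=> /andP [alpha_gt0 alpha_le1] /andP [rho_ge0 rho_le] shat s out shat_ge0 _ s_gt0.
case=> b [b_ge0 b_sum _ _ run]; set OPTC := makespan shat b.
have OPTC_ge0 : (0 <= OPTC)%E by apply: makespan_ge0.
pose Q M := [/\ (state_makespan shat M <= (1 + alpha)%:E * OPTC)%E, wf_state P M &
  forall r, OPTC = r%:E -> excess_bounded shat r M].
have Q_init : Q (fun i => [:: b i]).
  split; [|exact: wf_state_singletons|by move=> r; exact: excess_bounded_singletons].
  by rewrite /state_makespan coll_load_singletons lee_pemull // lee_fin lerDl ltW.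
have Q_step M M' : Q M -> loop_cond rho M -> rebalance M M' ->
    (state_makespan shat M' <= (1 + alpha)%:E * OPTC)%E -> Q M'.
  move=> [_ wf exc] _ rb within; split=> //; first exact: wf_state_rebalance wf rb.
  have [bags_ge0 _ _ _] := wf.
  by move=> r OPTC_r; exact: excess_bounded_rebalance bags_ge0 (exc r OPTC_r) rb.
have [M [[M_le wf exc] -> stop]] := ipr_loop_final_state run Q_init Q_step.
have [bags_ge0 count total _] := wf.
have allbags_ge0 x : x \in allbags M -> 0 <= x by case/allbagsP=> i; apply: bags_ge0.
have c_ge2 : 2 <= 1 + alpha^-1 by rewrite -[2]/(1 + 1) lerD2l invf_ge1.
have ratio x y : x \in allbags M -> y \in allbags M -> x <= (1 + alpha^-1) * y.
  case: stop => [stop | [M' [_ rb exceeds]]] xM yM.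
    apply: le_trans (not_loop_cond_ratio rho_ge0 stop allbags_ge0 xM yM) _.
    by rewrite ler_wpM2r ?allbags_ge0.
  have [r OPTC_r] : exists r, OPTC = r%:E.
    move: OPTC_ge0 exceeds; rewrite -/OPTC; case: (OPTC) => [r _ _| _ |//].
      by exists r.
    by rewrite gt0_muley ?lte_fin ?ltr_wpDr ?ltW // ltNge leey.
  move: M_le exceeds; rewrite -/OPTC OPTC_r -EFinM => M_le exceeds.
  exact: rebalance_overshoot_ratio alpha_gt0 shat_ge0 wf (exc r OPTC_r) M_le rb exceeds x y xM yM.
have size_bags : size (allbags M) = m by rewrite size_allbags.
apply: le_trans (sched_makespan_le_ratio m_gt0 s_gt0 size_bags allbags_ge0 ratio c_ge2) _.
rewrite sum_allbags total -mulrA EFinM lee_wpmul2l ?opt_ge_avg // lee_fin.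
by rewrite (le_trans _ c_ge2).
Qed.

End IPR.

Theorem theorem4 (R : realType) (m : nat) (P eps alpha : R) :
  (0 < m)%N -> 0 < P ->
  0 < eps < 1 -> 0 < alpha < 1 ->
  @consistent R m P (@IPR R m P alpha eps 2) ((1 + eps) * (1 + alpha)) /\
  @robust R m P (@IPR R m P alpha eps 2) (1 + alpha^-1).
Proof.
move=> m_gt0 _ _ /andP [alpha_gt0 alpha_lt1]; split.
  by apply: (IPR_consistent m_gt0); rewrite ltW.
have c_ge2 : 2 <= 1 + alpha^-1 by rewrite -[2]/(1 + 1) lerD2l invf_ge1 // ltW.
by apply: (IPR_robust m_gt0); rewrite ?alpha_gt0 ?c_ge2 ?(ltW alpha_lt1) ?ler0n.
Qed.
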